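(* Let $q$ be a prime power and $m,n$ positive integers. For every primitive polynomial $f(X)\in\mathbb{F}_q[X]$ of degree $mn$ there exists an $(m,n)$-block companion matrix $T$ over $\mathbb{F}_q$ with $T\in \mathrm{GL}_{mn}(\mathbb{F}_q)$, $o(T)=q^{mn}-1$, and $\det(XI_{mn}-T)=f(X)$. In other words, the map $\Psi$ sending a matrix $T\in\mathrm{BCM}(m,n;q)\cap\mathrm{GL}_{mn}(\mathbb{F}_q)$ with $o(T)=q^{mn}-1$ to its characteristic polynomial $\det(XI_{mn}-T)$ is a surjection onto the set of primitive polynomials of degree $mn$ in $\mathbb{F}_q[X]$.
   Context: A monic polynomial $f(X)\in\mathbb{F}_q[X]$ of degree $d$ is primitive if $f(0)\neq 0$ and the least positive integer $e$ with $f(X)\mid X^e-1$ equals $q^d-1$. For $T\in\mathrm{GL}_{mn}(\mathbb{F}_q)$, $o(T)$ is its order in this group. An $(m,n)$-block companion matrix over $\mathbb{F}_q$ is an $mn\times mn$ matrix, written in $n\times n$ blocks of size $m\times m$, whose last block column is $(C_0,C_1,\dots,C_{n-1})^{T}$ for some $C_0,\dots,C_{n-1}\in M_m(\mathbb{F}_q)$, whose block in position $(i+1,i)$ is the identity $I_m$ for $i=1,\dots,n-1$, and all of whose other blocks are zero; $\mathrm{BCM}(m,n;q)$ denotes the set of all such matrices. *)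

From HB Require Import structures.
From mathcomp Require Import all_boot all_order all_algebra all_field.
Set Implicit Arguments. Unset Strict Implicit. Unset Printing Implicit Defensive.
Import GRing.Theory.
Local Open Scope ring_scope.

Definition is_primitive_poly (F : finFieldType) (d : nat) (f : {poly F}) : Prop :=
  [/\ f \is monic, size f = d.+1, f.[0] != 0,
      f %| 'X^(#|F| ^ d - 1) - 1
    & forall e : nat, (0 < e)%N -> (e < #|F| ^ d - 1)%N -> ~~ (f %| 'X^e - 1)].

Definition mx_order (F : fieldType) (N : nat) (T : 'M[F]_N) (k : nat) : Prop :=
  [/\ (0 < k)%N, T ^+ k = 1%:M
    & forall j : nat, (0 < j)%N -> (j < k)%N -> T ^+ j != 1%:M].

(* Index i of 'I_(m*n) lies in block row i %/ m at position i %% m.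
   Block (b+1, b) (1-based: (i+1,i)) is I_m, last block column holds C_b in
   block row b, other blocks are zero. *)
Definition bcm (F : fieldType) (m n : nat) (C : 'I_n -> 'M[F]_m) : 'M[F]_(m * n) :=
  \matrix_(i < m * n, j < m * n)
    let bi := (i %/ m)%N in let ri := (i %% m)%N in
    let bj := (j %/ m)%N in let rj := (j %% m)%N in
    if bj == n.-1 then
      (match insub bi, insub ri, insub rj with
       | Some b, Some r, Some s => C b r s
       | _, _, _ => 0 end)
    else if (bi == bj.+1) && (ri == rj) then 1 else 0.

Definition BCM (F : fieldType) (m n : nat) : 'M[F]_(m * n) -> Prop :=
  fun T => exists C : 'I_n -> 'M[F]_m, T = bcm C.
Arguments BCM {F} m n _.

From HB Require Import structures.
From mathcomp Require Import all_boot all_order all_algebra all_field.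
From mathcomp Require Import all_fingroup zify.
Set Implicit Arguments. Unset Strict Implicit. Unset Printing Implicit Defensive.
Import GRing.Theory.
Local Open Scope ring_scope.

(* The companion matrix C of f, with ones on the subdiagonal and the negated
   coefficients of f in its last column, has e_0 as a cyclic vector
   (C^k e_0 = e_k), so its minimal polynomial is its characteristic polynomial
   f.  Hence C^k = 1 iff f divides X^k - 1, and C has order q^(mn) - 1 exactly
   because f is primitive.  Relabelling the index b m + r (row r of block b) as
   r n + b conjugates C by a permutation matrix, which changes neither powers
   nor characteristic polynomial, and turns every column outside the last block
   column into a column of an identity block (b + 1, b): the result is an
   (m,n)-block companion matrix. *)

Lemma horner_mx_cyclic_vec (F : fieldType) N (A : 'M[F]_N.+1) (v : 'cV_N.+1)
    (g : {poly F}) :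
  (forall k : 'I_N.+1, A ^+ k *m v = delta_mx k 0) -> (size g <= N.+1)%N ->
  horner_mx A g *m v = \col_i g`_i.
Proof.
move=> Av sg.
have -> : horner_mx A g = \sum_(i < N.+1) g`_i *: A ^+ i.
  rewrite -{1}[g]coefK poly_def rmorph_sum /=.
  rewrite (big_ord_widen N.+1 (fun i => horner_mx A (g`_i *: 'X^i)) sg) big_mkcond.
  apply: eq_bigr => i _; rewrite linearZ /= rmorphXn /= horner_mx_X.
  by case: ltnP => // le_g_i; rewrite nth_default // scale0r.
rewrite mulmx_suml; apply/matrixP => i j; rewrite ord1 summxE !mxE.
rewrite (bigD1 i) //= -scalemxAl Av !mxE !eqxx mulr1 big1 ?addr0 // => k ki.
by rewrite -scalemxAl Av !mxE eq_sym (negPf ki) mulr0.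
Qed.

Lemma mxminpoly_cyclic (F : fieldType) N (A : 'M[F]_N.+1) (v : 'cV_N.+1) :
  (forall k : 'I_N.+1, A ^+ k *m v = delta_mx k 0) -> mxminpoly A = char_poly A.
Proof.
move=> Av.
have large : ~~ (size (mxminpoly A) <= N.+1)%N.
  apply/negP => small; have := horner_mx_cyclic_vec Av small.
  rewrite mx_root_minpoly mul0mx => /matrixP zero.
  have /eqP[] : mxminpoly A != 0 by apply/monic_neq0/mxminpoly_monic.
  apply/polyP => i; rewrite coef0.
  case: (ltnP i N.+1) => [lt_i | le_i]; last by rewrite nth_default ?(leq_trans small).
  by have := zero (Ordinal lt_i) 0; rewrite !mxE.
have same_size : size (mxminpoly A) == size (char_poly A).
  rewrite eqn_leq dvdp_leq ?mxminpoly_dvd_char ?monic_neq0 ?char_poly_monic //=.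
  by rewrite size_char_poly ltnNge.
apply/eqP; rewrite -eqp_monic ?mxminpoly_monic ?char_poly_monic //.
by rewrite -dvdp_size_eqp ?mxminpoly_dvd_char.
Qed.

Lemma expr_eq1_mxminpoly (F : fieldType) N (A : 'M[F]_N.+1) k :
  (A ^+ k == 1%:M) = (mxminpoly A %| 'X^k - 1).
Proof.
by rewrite dvd_mxminpoly rmorphB rmorphXn /= horner_mx_X subr_eq0 [horner_mx A 1]rmorph1.
Qed.

Definition companion_colmx (R : nzRingType) N (p : {poly R}) : 'M[R]_N :=
  \matrix_(i, j) if j == N.-1 :> nat then - p`_i else (i == j.+1 :> nat)%:R.

Lemma char_poly_companion_col (F : fieldType) N (p : {poly F}) :
  p \is monic -> size p = N.+1 -> char_poly (companion_colmx N p) = p.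
Proof.
move=> p_monic size_p.
have e : (size p).-1 = N by rewrite size_p.
have -> : companion_colmx N p = (castmx (e, e) (companionmx p))^T.
  apply/matrixP => i j; rewrite !mxE castmxE !mxE /= size_p /=.
  by case: (j == N.-1 :> nat); rewrite // eq_sym.
rewrite /char_poly -det_tr.
have -> : (char_poly_mx (castmx (e, e) (companionmx p))^T)^T =
          char_poly_mx (castmx (e, e) (companionmx p)).
  by apply/matrixP => i j; rewrite !mxE eq_sym.
by move: (companionmx p) (companionmxK p_monic); clear size_p; case: N / e.
Qed.

Lemma companion_col_expr_e0 (F : fieldType) N (p : {poly F}) k : (k < N)%N ->
  companion_colmx N p ^+ k *m \col_i (i == 0 :> nat)%:R = \col_i (i == k :> nat)%:R.
Proof.
elim: k => [|k IHk] lt_k; first by rewrite expr0 mul1mx.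
rewrite exprS -mulmxE -mulmxA IHk ?(ltnW lt_k) //.
apply/matrixP => i j; rewrite !mxE (bigD1 (Ordinal (ltnW lt_k))) //= !mxE eqxx.
have -> : (k == N.-1) = false by apply/eqP; lia.
rewrite mulr1 big1 ?addr0 // => l l_neq_k.
by rewrite !mxE -(inj_eq val_inj) in l_neq_k *; rewrite (negPf l_neq_k) mulr0.
Qed.

Lemma companion_col_expr_eq1 (F : fieldType) N (p : {poly F}) k :
  p \is monic -> size p = N.+1 ->
  (companion_colmx N p ^+ k == 1%:M) = (p %| 'X^k - 1).
Proof.
case: N => [|N] p_monic size_p.
  rewrite [_ ^+ k]flatmx0 [1%:M]flatmx0 eqxx; symmetry.
  by apply: (@dvdp_trans _ 1); rewrite ?dvd1p // dvdp1 size_p.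
rewrite expr_eq1_mxminpoly (mxminpoly_cyclic (v := \col_i (i == 0 :> nat)%:R)).
  by rewrite char_poly_companion_col.
move=> k'; rewrite companion_col_expr_e0 //.
by apply/matrixP => i j; rewrite ord1 !mxE eqxx andbT.
Qed.

Section PermConjugation.
Variables (R : comNzRingType) (N : nat) (s : 'S_N).
Implicit Types A B : 'M[R]_N.

Lemma mulmx_col_row_perm A B :
  col_perm s (row_perm s A) *m col_perm s (row_perm s B) =
  col_perm s (row_perm s (A *m B)).
Proof.
apply/matrixP => i j; rewrite !mxE [RHS](reindex_inj (@perm_inj _ s)).
by apply: eq_bigr => k _; rewrite !mxE.
Qed.

Lemma col_row_perm1 : col_perm s (row_perm s 1%:M) = 1%:M :> 'M[R]_N.
Proof. by apply/matrixP => i j; rewrite !mxE (inj_eq perm_inj). Qed.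

Lemma col_row_perm_expr A k :
  col_perm s (row_perm s A) ^+ k = col_perm s (row_perm s (A ^+ k)).
Proof.
elim: k => [|k IHk]; last by rewrite !exprS -!mulmxE IHk mulmx_col_row_perm.
by rewrite !expr0 col_row_perm1.
Qed.

Lemma col_row_perm_eq1 A :
  (col_perm s (row_perm s A) == 1%:M) = (A == 1%:M).
Proof.
have K : cancel (fun B => col_perm s (row_perm s B))
                (fun B => col_perm s^-1 (row_perm s^-1 B)).
  by move=> B; apply/matrixP => i j; rewrite !mxE !permKV.
by rewrite -{1}col_row_perm1 (can_eq K).
Qed.

Lemma char_poly_col_row_perm A :
  char_poly (col_perm s (row_perm s A)) = char_poly A.
Proof.
rewrite /char_poly.
have -> : char_poly_mx (col_perm s (row_perm s A)) =
          col_perm s (row_perm s (char_poly_mx A)).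
  by apply/matrixP => i j; rewrite !mxE (inj_eq perm_inj).
rewrite col_permE row_permE !det_mulmx !det_perm odd_permV.
by rewrite mulrC mulrA -signr_addb addbb mul1r.
Qed.
End PermConjugation.

Lemma eqn_digits2 (a b c d n : nat) : (b < n)%N -> (d < n)%N ->
  (a * n + b == c * n + d)%N = (a == c) && (b == d).
Proof.
move=> lt_b lt_d; apply/eqP/andP => [eq_abcd|[/eqP-> /eqP->]] //.
have n_gt0 : (0 < n)%N by apply: leq_ltn_trans lt_b.
have := congr1 (modn^~ n) eq_abcd; have := congr1 (divn^~ n) eq_abcd => /=.
by rewrite !modnMDl !divnMDl // !modn_small // !divn_small // !addn0 => -> ->.
Qed.

Section BlockIndices.
Variables m n : nat.

Lemma block_size_gt0 (i : 'I_(m * n)) : (0 < m)%N.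
Proof. by case: m i => // [[]]. Qed.

Lemma ltn_block_div (i : 'I_(m * n)) : (i %/ m < n)%N.
Proof. by rewrite ltn_divLR ?(block_size_gt0 i) // [(n * m)%N]mulnC. Qed.

Lemma ltn_block_mod (i : 'I_(m * n)) : (i %% m < m)%N.
Proof. by rewrite ltn_pmod ?(block_size_gt0 i). Qed.

Lemma block_shuffle_subproof (i : 'I_(m * n)) : ((i %% m) * n + i %/ m < m * n)%N.
Proof. have := ltn_block_div i; have := ltn_block_mod i; nia. Qed.

Definition block_shuffle_fun (i : 'I_(m * n)) : 'I_(m * n) :=
  Ordinal (block_shuffle_subproof i).

Lemma block_shuffle_inj : injective block_shuffle_fun.
Proof.
move=> i j /(congr1 val) /= /eqP.
rewrite eqn_digits2 ?ltn_block_div // => /andP[/eqP eq_mod /eqP eq_div].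
by apply: val_inj; rewrite /= (divn_eq i m) (divn_eq j m) eq_mod eq_div.
Qed.

Definition block_shuffle : 'S_(m * n) := perm block_shuffle_inj.
End BlockIndices.

Lemma BCM_shift_blocks (F : fieldType) m n (T : 'M[F]_(m * n)) : (0 < n)%N ->
  (forall i j : 'I_(m * n), (j %/ m != n.-1)%N ->
     T i j = ((i %/ m == (j %/ m).+1) && (i %% m == j %% m))%N%:R) ->
  BCM m n T.
Proof.
move=> n_gt0 T_shift; have last_lt : (n.-1 < n)%N by rewrite ltn_predL.
pose last_block : 'I_n := Ordinal last_lt.
have block_lt (b : 'I_n) (r : 'I_m) : (b * m + r < m * n)%N.
  by have := ltn_ord b; have := ltn_ord r; nia.
exists (fun b => \matrix_(r, c)
  T (Ordinal (block_lt b r)) (Ordinal (block_lt last_block c))).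
apply/matrixP => i j; rewrite /bcm mxE /=; case: eqP => [last_j|/eqP other_j].
  case: insubP => [b _ val_b|]; last by rewrite ltn_block_div.
  case: insubP => [r _ val_r|]; last by rewrite ltn_block_mod.
  case: insubP => [c _ val_c|]; last by rewrite ltn_block_mod.
  rewrite mxE; congr (T _ _); apply: val_inj => /=.
    by rewrite val_b val_r -divn_eq.
  by rewrite val_c -last_j -divn_eq.
by rewrite T_shift //; case: (_ && _).
Qed.

Lemma block_shuffle_companion_col (F : fieldType) m n (p : {poly F})
    (i j : 'I_(m * n)) : (j %/ m != n.-1)%N ->
  col_perm (block_shuffle m n) (row_perm (block_shuffle m n)
    (companion_colmx (m * n) p)) i j =
  ((i %/ m == (j %/ m).+1) && (i %% m == j %% m))%N%:R.
Proof.
move=> not_last; have lt_jmod := ltn_block_mod j; have lt_jdiv := ltn_block_div j.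
have lt_next : ((j %/ m).+1 < n)%N.
  by move: (j %/ m)%N not_last lt_jdiv => b; rewrite -subn1; lia.
rewrite !mxE !permE /=.
have -> : ((j %% m) * n + j %/ m == (m * n).-1)%N = false.
  apply/eqP; have := leq_mul lt_jmod (leqnn n); move: lt_next.
  by rewrite mulSn -subn1; move: (j %/ m)%N (j %% m * n)%N => b x; lia.
by rewrite -addnS eqn_digits2 ?ltn_block_div // andbC.
Qed.

Lemma mx_order_unitmx (F : fieldType) N (A : 'M[F]_N) k :
  mx_order A k -> A \in unitmx.
Proof.
case=> k_gt0 + _; rewrite -(prednK k_gt0) exprS -mulmxE.
by case/mulmx1_unit.
Qed.

Lemma primitive_mx_order (F : finFieldType) N (A : 'M[F]_N) (f : {poly F}) :
  (0 < N)%N -> is_primitive_poly N f ->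
  (forall k, (A ^+ k == 1%:M) = (f %| 'X^k - 1)) ->
  mx_order A (#|F| ^ N - 1).
Proof.
move=> N_gt0 [_ _ _ f_dvd f_min] A_order; split.
- by rewrite subn_gt0 -{1}(expn0 #|F|) ltn_exp2l ?card_finNzRing_gt1.
- by apply/eqP; rewrite A_order.
- by move=> j j_gt0 j_lt; rewrite A_order f_min.
Qed.

Theorem theorem6p1 (F : finFieldType) (m n : nat) :
  (0 < m)%N -> (0 < n)%N ->
  forall f : {poly F}, is_primitive_poly (m * n)%N f ->
  exists T : 'M[F]_(m * n),
    [/\ BCM m n T, T \in unitmx, mx_order T (#|F| ^ (m * n) - 1)%N
      & char_poly T = f].
Proof.
move=> m_gt0 n_gt0 f f_prim; have [f_monic size_f _ _ _] := f_prim.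
pose s := block_shuffle m n.
pose T := col_perm s (row_perm s (companion_colmx (m * n) f)).
have T_order : mx_order T (#|F| ^ (m * n) - 1).
  apply: primitive_mx_order f_prim _; first by rewrite muln_gt0 m_gt0.
  by move=> k; rewrite col_row_perm_expr col_row_perm_eq1 companion_col_expr_eq1.
exists T; split => //.
- exact/BCM_shift_blocks/block_shuffle_companion_col.
- exact: mx_order_unitmx T_order.
- by rewrite char_poly_col_row_perm char_poly_companion_col.
Qed.
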